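(* There are universal constants $0<c_1\le c_2$ such that for all positive integers $m$ and all $p,q\in[0,1]$, \[ c_1\min\left(m|p-q|,\frac{\sqrt m\,|p-q|}{\sqrt{p(1-p)}},1\right)\le \ell_1(\mathrm{Bin}(m,p),\mathrm{Bin}(m,q))\le c_2\min\left(m|p-q|,\frac{\sqrt m\,|p-q|}{\sqrt{p(1-p)}},1\right). \]
   Context: $\ell_1(P,Q)=\sum_x|P(x)-Q(x)|$ for distributions on $\{0,1,\dots,m\}$, and $\mathrm{Bin}(m,p)$ is the binomial distribution. When $p(1-p)=0$ the middle term is interpreted as $+\infty$ if $p\neq q$ (and $0$ if $p=q$). *)

From Stdlib Require Import Reals.
Open Scope R_scope.

Definition binom_pmf (m : nat) (p : R) (k : nat) : R :=
  C m k * p ^ k * (1 - p) ^ (m - k).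

Definition l1_binom (m : nat) (p q : R) : R :=
  sum_f_R0 (fun k => Rabs (binom_pmf m p k - binom_pmf m q k)) m.

(* min( m|p-q|, sqrt m |p-q| / sqrt(p(1-p)), 1 ), where the middle term
   is +infinity when p(1-p) = 0 and p <> q, and 0 when p = q
   (in which case m|p-q| = 0 as well, so dropping it changes nothing). *)
Definition rate (m : nat) (p q : R) : R :=
  if Req_EM_T (p * (1 - p)) 0 then Rmin (INR m * Rabs (p - q)) 1
  else Rmin (Rmin (INR m * Rabs (p - q))
                  (sqrt (INR m) * Rabs (p - q) / sqrt (p * (1 - p)))) 1.

(* Upper bound.  [Bin(m+1, .)] is [Bin(m, .)] plus an independent Bernoulli
   trial, so each trial adds at most [2 |p - q|] to the distance.  Termwise AM-GM
   gives [l1 <= chi2 / (2 t) + t / 2] for every [t > 0], where the chi-square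
   divergence [chi2 = (1 + (p - q)^2 / (p (1 - p)))^m - 1] is at most twice the
   squared mean shift [r^2 = m (p - q)^2 / (p (1 - p))] when [r^2 <= 1/2]; take [t = r].

   If [m p (1 - p) < 1], one of the endpoints [k = 0], [k = m] has
   probability at least [1/81] under [Bin(m, p)], and its probabilities under the
   two laws differ by a constant times [min (m |p - q|, 1)].  Otherwise the
   likelihood ratio is [exp (beta (k - c))], where [beta] is the difference of the
   log-odds, [|beta| >= min (|p - q| / (2 p (1 - p)), 1/2)], so that
   [l1 >= E min (|beta| |X - c|, 1) / 2] for [X ~ Bin(m, p)].  An anti-concentration
   estimate [E min (b |X - c|, 1) >= b s / 40] for [b s <= 1/200], [s] the standard
   deviation of [X], obtained from the second and fourth central moments, then gives
   a constant times [min (r, 1)]. *)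

From Stdlib Require Import Reals Lra Lia Psatz.
Open Scope R_scope.

(** * Binomial expectations *)

Definition seq_shift (a : nat -> R) (k : nat) : R :=
  match k with O => 0 | S j => a j end.

Definition seq_trunc (m : nat) (b : nat -> R) (k : nat) : R :=
  if Nat.leb k m then b k else 0.

Lemma sum_f_R0_shift_trunc a b m :
  sum_f_R0 (fun k => seq_shift a k + seq_trunc m b k) (S m) =
  sum_f_R0 a m + sum_f_R0 b m.
Proof.
  rewrite plus_sum. f_equal.
  - rewrite decomp_sum by lia. simpl. rewrite Rplus_0_l. reflexivity.
  - rewrite tech5. unfold seq_trunc at 2.
    rewrite (proj2 (Nat.leb_gt (S m) m)), Rplus_0_r by lia.
    apply sum_eq. intros i Hi. unfold seq_trunc.
    rewrite (proj2 (Nat.leb_le i m)) by lia. reflexivity.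
Qed.

Lemma sum_f_R0_scal_l (f : nat -> R) c n :
  sum_f_R0 (fun i => c * f i) n = c * sum_f_R0 f n.
Proof. rewrite scal_sum. apply sum_eq. intros. ring. Qed.

Lemma sum_f_R0_ge_term (f : nat -> R) n k :
  (forall i, 0 <= f i) -> (k <= n)%nat -> f k <= sum_f_R0 f n.
Proof.
  intros Hf Hk. induction n as [|n IH].
  - replace k with 0%nat by lia. simpl. lra.
  - rewrite tech5. destruct (Nat.eq_dec k (S n)) as [->|Hne].
    + pose proof (cond_pos_sum f n Hf). lra.
    + pose proof (Hf (S n)). pose proof (IH ltac:(lia)). lra.
Qed.

Lemma C_n_0 n : C n 0 = 1.
Proof. unfold C. rewrite Nat.sub_0_r. simpl. field. apply INR_fact_neq_0. Qed.

Lemma C_n_n n : C n n = 1.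
Proof. unfold C. rewrite Nat.sub_diag. simpl. field. apply INR_fact_neq_0. Qed.

Lemma C_pos n k : 0 < C n k.
Proof.
  unfold C. apply Rdiv_lt_0_compat; [|apply Rmult_lt_0_compat]; apply INR_fact_lt_0.
Qed.

Lemma binom_pmf_0 m p : binom_pmf m p 0 = (1 - p) ^ m.
Proof. unfold binom_pmf. rewrite C_n_0, Nat.sub_0_r. ring. Qed.

Lemma binom_pmf_diag m p : binom_pmf m p m = p ^ m.
Proof. unfold binom_pmf. rewrite C_n_n, Nat.sub_diag. ring. Qed.

Lemma binom_pmf_nonneg m p k : 0 <= p <= 1 -> 0 <= binom_pmf m p k.
Proof.
  intros Hp. unfold binom_pmf. pose proof (C_pos m k).
  apply Rmult_le_pos; [apply Rmult_le_pos|]; try apply pow_le; lra.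
Qed.

Lemma binom_pmf_pos m p k : 0 < p < 1 -> 0 < binom_pmf m p k.
Proof.
  intros Hp. unfold binom_pmf. pose proof (C_pos m k).
  apply Rmult_lt_0_compat; [apply Rmult_lt_0_compat|]; try apply pow_lt; lra.
Qed.

(* [Bin(m+1, p)] is the law of [X + B] with [X ~ Bin(m, p)] and an independent
   Bernoulli [B]. The bound on [k] is needed since [C n k] is not [0] for [k > n]. *)
Lemma binom_pmf_succ m p k : (k <= S m)%nat ->
  binom_pmf (S m) p k =
  seq_shift (fun j => p * binom_pmf m p j) k +
  seq_trunc m (fun j => (1 - p) * binom_pmf m p j) k.
Proof.
  intros Hk. unfold binom_pmf, seq_shift, seq_trunc. destruct k as [|j].
  - rewrite !C_n_0, !Nat.sub_0_r. simpl. ring.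
  - destruct (Nat.eq_dec j m) as [->|Hne].
    + rewrite (proj2 (Nat.leb_gt (S m) m)), !C_n_n, !Nat.sub_diag by lia. simpl. ring.
    + rewrite (proj2 (Nat.leb_le (S j) m)), <- pascal by lia.
      replace (S m - S j)%nat with (S (m - S j)) by lia.
      replace (m - j)%nat with (S (m - S j)) by lia.
      simpl. ring.
Qed.

Definition binom_expect (m : nat) (p : R) (g : nat -> R) : R :=
  sum_f_R0 (fun k => binom_pmf m p k * g k) m.

Lemma binom_expect_succ m p g :
  binom_expect (S m) p g =
  p * binom_expect m p (fun k => g (S k)) + (1 - p) * binom_expect m p g.
Proof.
  unfold binom_expect.
  rewrite (sum_eq _ (fun k => seq_shift (fun j => p * (binom_pmf m p j * g (S j))) k +
                       seq_trunc m (fun j => (1 - p) * (binom_pmf m p j * g j)) k)).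
  - rewrite sum_f_R0_shift_trunc, !sum_f_R0_scal_l. reflexivity.
  - intros k Hk. rewrite binom_pmf_succ by lia. unfold seq_shift, seq_trunc.
    destruct k, (Nat.leb _ m); ring.
Qed.

Lemma binom_expect_ext m p g h :
  (forall k, (k <= m)%nat -> g k = h k) -> binom_expect m p g = binom_expect m p h.
Proof. intros H. apply sum_eq. intros k Hk. rewrite H; auto. Qed.

Lemma binom_expect_lin m p g h a b :
  binom_expect m p (fun k => a * g k + b * h k) =
  a * binom_expect m p g + b * binom_expect m p h.
Proof.
  unfold binom_expect. rewrite <- !sum_f_R0_scal_l, <- plus_sum.
  apply sum_eq. intros. ring.
Qed.

Lemma binom_expect_le m p g h : 0 <= p <= 1 ->
  (forall k, (k <= m)%nat -> g k <= h k) -> binom_expect m p g <= binom_expect m p h.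
Proof.
  intros Hp H. apply sum_Rle. intros k Hk.
  apply Rmult_le_compat_l; auto. apply binom_pmf_nonneg; auto.
Qed.

Lemma binom_expect_1 m p : binom_expect m p (fun _ => 1) = 1.
Proof.
  induction m as [|m IH].
  - unfold binom_expect. simpl. rewrite binom_pmf_0. ring.
  - rewrite binom_expect_succ, IH. ring.
Qed.

Lemma sum_binom_pmf m p : sum_f_R0 (binom_pmf m p) m = 1.
Proof.
  rewrite <- (binom_expect_1 m p). apply sum_eq. intros. ring.
Qed.

Lemma binom_expect_sq m p c :
  binom_expect m p (fun k => (INR k - c) ^ 2) =
  (INR m * p - c) ^ 2 + INR m * (p * (1 - p)).
Proof.
  revert c. induction m as [|m IH]; intro c.
  - unfold binom_expect. simpl. rewrite binom_pmf_0. ring.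
  - rewrite binom_expect_succ,
      (binom_expect_ext _ _ _ (fun k => (INR k - (c - 1)) ^ 2)).
    + rewrite !IH, S_INR. ring.
    + intros. rewrite S_INR. ring.
Qed.

Lemma binom_expect_pow4 m p c :
  let d := INR m * p - c in let v := INR m * (p * (1 - p)) in
  binom_expect m p (fun k => (INR k - c) ^ 4) =
  d ^ 4 + 6 * d ^ 2 * v + 4 * d * v * (1 - 2 * p) + 3 * v ^ 2 + v * (1 - 6 * (p * (1 - p))).
Proof.
  revert c. induction m as [|m IH]; intro c; cbv zeta.
  - unfold binom_expect. simpl. rewrite binom_pmf_0. ring.
  - rewrite binom_expect_succ,
      (binom_expect_ext _ _ _ (fun k => (INR k - (c - 1)) ^ 4)).
    + rewrite !IH, S_INR. ring.
    + intros. rewrite S_INR. ring.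
Qed.

(** * Upper bound *)

Lemma l1_binom_nonneg m p q : 0 <= l1_binom m p q.
Proof. apply cond_pos_sum. intros. apply Rabs_pos. Qed.

Lemma l1_binom_ge_term m p q k : (k <= m)%nat ->
  Rabs (binom_pmf m p k - binom_pmf m q k) <= l1_binom m p q.
Proof.
  intros Hk. apply (sum_f_R0_ge_term (fun k => Rabs (binom_pmf m p k - binom_pmf m q k)));
    auto using Rabs_pos.
Qed.

Lemma l1_binom_le_2 m p q : 0 <= p <= 1 -> 0 <= q <= 1 -> l1_binom m p q <= 2.
Proof.
  intros Hp Hq.
  apply Rle_trans with (sum_f_R0 (fun k => binom_pmf m p k + binom_pmf m q k) m).
  - apply sum_Rle. intros k _.
    pose proof (binom_pmf_nonneg m p k Hp). pose proof (binom_pmf_nonneg m q k Hq).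
    unfold Rabs. destruct (Rcase_abs _); lra.
  - rewrite plus_sum, !sum_binom_pmf. lra.
Qed.

Lemma Rabs_shift_trunc_le f g m k :
  Rabs (seq_shift f k + seq_trunc m g k) <=
  seq_shift (fun j => Rabs (f j)) k + seq_trunc m (fun j => Rabs (g j)) k.
Proof.
  unfold seq_shift, seq_trunc.
  destruct k, (Nat.leb _ m); rewrite ?Rplus_0_l, ?Rplus_0_r, ?Rabs_R0;
    auto using Rabs_triang, Rle_refl.
Qed.

Lemma Rabs_scal_sub_le a b x y : 0 <= a -> 0 <= y ->
  Rabs (a * x - b * y) <= a * Rabs (x - y) + Rabs (a - b) * y.
Proof.
  intros Ha Hy. replace (a * x - b * y) with (a * (x - y) + (a - b) * y) by ring.
  eapply Rle_trans; [apply Rabs_triang|].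
  rewrite !Rabs_mult, (Rabs_pos_eq a), (Rabs_pos_eq y) by lra. lra.
Qed.

Lemma l1_binom_succ_le m p q : 0 <= p <= 1 -> 0 <= q <= 1 ->
  l1_binom (S m) p q <= l1_binom m p q + 2 * Rabs (p - q).
Proof.
  intros Hp Hq. unfold l1_binom at 1.
  rewrite (sum_eq _ (fun k => Rabs (
    seq_shift (fun j => p * binom_pmf m p j - q * binom_pmf m q j) k +
    seq_trunc m (fun j => (1 - p) * binom_pmf m p j - (1 - q) * binom_pmf m q j) k))).
  2:{ intros k Hk. rewrite !binom_pmf_succ by lia. f_equal.
      unfold seq_shift, seq_trunc. destruct k, (Nat.leb _ m); ring. }
  set (P := binom_pmf m p). set (Q := binom_pmf m q).
  eapply Rle_trans; [apply sum_Rle; intros; apply Rabs_shift_trunc_le|].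
  rewrite sum_f_R0_shift_trunc.
  assert (HQ : forall j, 0 <= Q j) by (intro; apply binom_pmf_nonneg; auto).
  eapply Rle_trans.
  { apply Rplus_le_compat; apply sum_Rle; intros; apply Rabs_scal_sub_le; auto; lra. }
  rewrite !plus_sum, !sum_f_R0_scal_l. unfold Q. rewrite sum_binom_pmf.
  replace (1 - p - (1 - q)) with (- (p - q)) by ring. rewrite Rabs_Ropp.
  unfold l1_binom, P. lra.
Qed.

Lemma l1_binom_le_lin m p q : 0 <= p <= 1 -> 0 <= q <= 1 ->
  l1_binom m p q <= 2 * INR m * Rabs (p - q).
Proof.
  intros Hp Hq. induction m as [|m IH].
  - unfold l1_binom. simpl. rewrite !binom_pmf_0. simpl. rewrite Rminus_diag, Rabs_R0. lra.
  - eapply Rle_trans; [apply l1_binom_succ_le; auto|]. rewrite S_INR. lra.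
Qed.

Lemma binom_chi_sq m p q : 0 < p < 1 ->
  sum_f_R0 (fun k => binom_pmf m q k ^ 2 / binom_pmf m p k) m =
  (1 + (p - q) ^ 2 / (p * (1 - p))) ^ m.
Proof.
  intros Hp.
  replace (1 + (p - q) ^ 2 / (p * (1 - p))) with (q ^ 2 / p + (1 - q) ^ 2 / (1 - p))
    by (field; lra).
  rewrite binomial. apply sum_eq. intros k Hk. unfold binom_pmf.
  pose proof (C_pos m k).
  assert (0 < p ^ k) by (apply pow_lt; lra).
  assert (0 < (1 - p) ^ (m - k)) by (apply pow_lt; lra).
  unfold Rdiv. rewrite !Rpow_mult_distr, !pow_inv, <- !pow_mult, !(Nat.mul_comm 2), !pow_mult.
  field. lra.
Qed.

Lemma Rabs_sub_le_am_gm x y t : 0 < x -> 0 < t ->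
  Rabs (x - y) <= / (2 * t) * (y ^ 2 / x) - / t * y + (/ (2 * t) + t / 2) * x.
Proof.
  intros Hx Ht.
  assert (Hid : / (2 * t) * (y ^ 2 / x) - / t * y + (/ (2 * t) + t / 2) * x - Rabs (x - y) =
                (Rabs (x - y) - t * x) ^ 2 / (2 * t * x)).
  { replace ((Rabs (x - y) - t * x) ^ 2)
      with ((x - y) ^ 2 - 2 * t * x * Rabs (x - y) + (t * x) ^ 2) by (rewrite <- pow2_abs; ring).
    field. lra. }
  assert (0 <= (Rabs (x - y) - t * x) ^ 2 / (2 * t * x)).
  { apply Rmult_le_pos; [apply pow2_ge_0|]. left. apply Rinv_0_lt_compat. nra. }
  lra.
Qed.

Lemma l1_binom_le_chi_sq m p q t : 0 < p < 1 -> 0 < t ->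
  l1_binom m p q <= ((1 + (p - q) ^ 2 / (p * (1 - p))) ^ m - 1) / (2 * t) + t / 2.
Proof.
  intros Hp Ht. unfold l1_binom.
  eapply Rle_trans.
  { apply sum_Rle. intros k _. apply (Rabs_sub_le_am_gm _ _ t); auto. apply binom_pmf_pos; auto. }
  rewrite plus_sum, minus_sum, !sum_f_R0_scal_l, binom_chi_sq, !sum_binom_pmf by auto.
  right. field. lra.
Qed.

Lemma bernoulli_ineq y n : -1 <= y -> 1 + INR n * y <= (1 + y) ^ n.
Proof.
  intros Hy. induction n as [|n IH].
  - simpl. lra.
  - rewrite S_INR. simpl. pose proof (pos_INR n). nra.
Qed.

(* [(1 + y)^m (1 - y)^m <= 1] and Bernoulli's inequality for [1 - y] give
   [(1 + y)^m <= 1 / (1 - m y)]. *)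
Lemma pow_1_plus_le y m : 0 <= y -> INR m * y <= 1 / 2 ->
  (1 + y) ^ m <= 1 + 2 * (INR m * y).
Proof.
  intros Hy Hmy. destruct m as [|m]; [simpl; lra|].
  assert (Hy1 : y <= 1 / 2) by (rewrite S_INR in Hmy; pose proof (pos_INR m); nra).
  pose proof (bernoulli_ineq (- y) (S m) ltac:(lra)) as Hlow.
  assert (Hprod : (1 + y) ^ S m * (1 - y) ^ S m <= 1).
  { rewrite <- Rpow_mult_distr.
    apply Rle_trans with (1 ^ S m); [apply pow_incr; split; nra | rewrite pow1; lra]. }
  assert (0 <= (1 + y) ^ S m) by (apply pow_le; lra).
  assert (0 <= INR (S m) * y) by (apply Rmult_le_pos; auto using pos_INR).
  replace (1 - y) with (1 + - y) in Hprod by ring. nra.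
Qed.

Definition mean_shift (m : nat) (p q : R) : R :=
  sqrt (INR m) * Rabs (p - q) / sqrt (p * (1 - p)).

Lemma mean_shift_nonneg m p q : 0 <= mean_shift m p q.
Proof.
  unfold mean_shift, Rdiv.
  apply Rmult_le_pos; [apply Rmult_le_pos; [apply sqrt_pos|apply Rabs_pos]|].
  destruct (Req_dec (sqrt (p * (1 - p))) 0) as [->|H].
  - rewrite Rinv_0. lra.
  - left. apply Rinv_0_lt_compat. pose proof (sqrt_pos (p * (1 - p))). lra.
Qed.

Lemma mean_shift_sq m p q : 0 < p * (1 - p) ->
  mean_shift m p q ^ 2 = INR m * ((p - q) ^ 2 / (p * (1 - p))).
Proof.
  intros Hs. unfold mean_shift.
  pose proof (sqrt_lt_R0 _ Hs).
  replace ((sqrt (INR m) * Rabs (p - q) / sqrt (p * (1 - p))) ^ 2)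
    with (Rsqr (sqrt (INR m)) * Rabs (p - q) ^ 2 / Rsqr (sqrt (p * (1 - p))))
    by (unfold Rsqr; field; lra).
  rewrite !Rsqr_sqrt, pow2_abs; [field; nra | nra | apply pos_INR].
Qed.

Lemma l1_binom_le_mean_shift m p q : 0 < p < 1 -> 0 <= q <= 1 ->
  l1_binom m p q <= 3 * mean_shift m p q.
Proof.
  intros Hp Hq.
  set (r := mean_shift m p q).
  assert (Hr0 : 0 <= r) by apply mean_shift_nonneg.
  assert (Hr2 : r ^ 2 = INR m * ((p - q) ^ 2 / (p * (1 - p)))) by (apply mean_shift_sq; nra).
  destruct (Req_dec (INR m * Rabs (p - q)) 0) as [Hlin | Hlin].
  { pose proof (l1_binom_le_lin m p q ltac:(lra) Hq). lra. }
  assert (Hr : 0 < r).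
  { unfold r, mean_shift.
    apply Rdiv_lt_0_compat; [apply Rmult_lt_0_compat | apply sqrt_lt_R0; nra].
    - apply sqrt_lt_R0. destruct (Req_dec (INR m) 0) as [Hm | Hm].
      + rewrite Hm, Rmult_0_l in Hlin. lra.
      + pose proof (pos_INR m). lra.
    - apply Rabs_pos_lt. intro Hz. rewrite Hz, Rabs_R0, Rmult_0_r in Hlin. lra. }
  destruct (Rle_dec (r ^ 2) (1 / 2)) as [Hsmall|Hlarge].
  - eapply Rle_trans; [apply (l1_binom_le_chi_sq m p q r); auto|].
    assert (0 <= (p - q) ^ 2 / (p * (1 - p))).
    { apply Rmult_le_pos; [apply pow2_ge_0|]. left. apply Rinv_0_lt_compat. nra. }
    pose proof (pow_1_plus_le ((p - q) ^ 2 / (p * (1 - p))) m ltac:(auto) ltac:(lra)).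
    apply Rle_trans with (2 * r ^ 2 / (2 * r) + r / 2).
    + apply Rplus_le_compat_r, Rmult_le_compat_r; [left; apply Rinv_0_lt_compat|]; lra.
    + replace (2 * r ^ 2 / (2 * r)) with r by (field; lra). lra.
  - pose proof (l1_binom_le_2 m p q ltac:(lra) Hq). nra.
Qed.

Lemma var_neq0_interior p : 0 <= p <= 1 -> p * (1 - p) <> 0 -> 0 < p < 1.
Proof.
  intros Hp Hs. split; apply Rnot_le_lt; intro Hend; apply Hs.
  - replace p with 0 by lra. ring.
  - replace p with 1 by lra. ring.
Qed.

Lemma rate_le_lin m p q : rate m p q <= Rmin (INR m * Rabs (p - q)) 1.
Proof.
  unfold rate. destruct (Req_EM_T _ _); [lra|].
  apply Rle_min_compat_r, Rmin_l.
Qed.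

Lemma rate_le_mean_shift m p q : p * (1 - p) <> 0 ->
  rate m p q <= Rmin (mean_shift m p q) 1.
Proof.
  intros Hs. unfold rate. destruct (Req_EM_T _ _); [contradiction|].
  apply Rle_min_compat_r, Rmin_r.
Qed.

Lemma rate_glb m p q y :
  y <= INR m * Rabs (p - q) -> y <= 1 ->
  (p * (1 - p) <> 0 -> y <= mean_shift m p q) -> y <= rate m p q.
Proof.
  intros Hlin H1 Hshift. unfold rate.
  destruct (Req_EM_T _ _) as [Hs|Hs]; auto using Rmin_glb.
Qed.

Lemma l1_binom_upper m p q : 0 <= p <= 1 -> 0 <= q <= 1 ->
  l1_binom m p q <= 3 * rate m p q.
Proof.
  intros Hp Hq.
  pose proof (l1_binom_le_lin m p q Hp Hq).
  pose proof (l1_binom_le_2 m p q Hp Hq).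
  pose proof (l1_binom_nonneg m p q).
  pose proof (pos_INR m). pose proof (Rabs_pos (p - q)).
  cut (l1_binom m p q / 3 <= rate m p q); [lra|].
  apply rate_glb; try nra.
  intros Hs.
  pose proof (l1_binom_le_mean_shift m p q (var_neq0_interior p Hp Hs) Hq). lra.
Qed.

(** * Lower bound *)

Lemma one_minus_pow_ge m d : 0 <= d <= 1 -> Rmin (INR m * d) 1 / 2 <= 1 - (1 - d) ^ m.
Proof.
  intros Hd.
  assert (Hprod : (1 - d) ^ m * (1 + d) ^ m <= 1).
  { rewrite <- Rpow_mult_distr.
    apply Rle_trans with (1 ^ m); [apply pow_incr; split; nra | rewrite pow1; lra]. }
  pose proof (bernoulli_ineq d m ltac:(lra)).
  assert (0 <= (1 - d) ^ m) by (apply pow_le; lra).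
  assert (0 <= INR m * d) by (apply Rmult_le_pos; [apply pos_INR | lra]).
  unfold Rmin. destruct (Rle_dec _ _); nra.
Qed.

Lemma pow_diff_ge m a b : 0 <= a <= 1 -> 0 <= b <= 1 ->
  a ^ m * Rmin (INR m * Rabs (a - b)) 1 / 2 <= Rabs (a ^ m - b ^ m).
Proof.
  intros Ha Hb.
  assert (0 <= a ^ m) by (apply pow_le; lra).
  assert (0 <= Rmin (INR m * Rabs (a - b)) 1).
  { apply Rmin_glb; [apply Rmult_le_pos; [apply pos_INR | apply Rabs_pos] | lra]. }
  destruct (Rle_dec b a).
  - assert (b ^ m <= a ^ m) by (apply pow_incr; lra).
    rewrite !Rabs_pos_eq by lra.
    assert (b ^ m <= a ^ m * (1 - (a - b)) ^ m).
    { rewrite <- Rpow_mult_distr. apply pow_incr. split; nra. }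
    pose proof (one_minus_pow_ge m (a - b) ltac:(lra)). nra.
  - assert (a ^ m <= b ^ m) by (apply pow_incr; lra).
    rewrite !Rabs_left1 by lra.
    assert (a ^ m * (1 + (b - a)) ^ m <= b ^ m).
    { rewrite <- Rpow_mult_distr. apply pow_incr. split; nra. }
    pose proof (bernoulli_ineq (b - a) m ltac:(lra)).
    pose proof (Rmin_l (INR m * - (a - b)) 1). nra.
Qed.

Lemma exp_INR_mul_ln x n : 0 < x -> exp (INR n * ln x) = x ^ n.
Proof. intros Hx. rewrite <- Rpower_pow by auto. reflexivity. Qed.

Lemma exp_pow x n : exp x ^ n = exp (INR n * x).
Proof. rewrite <- (ln_exp x) at 2. symmetry. apply exp_INR_mul_ln, exp_pos. Qed.

(* [a (3 - 2 a) >= 1] on [[1/2, 1]] and [(3 - 2 a)^m <= exp (2 m (1 - a)) <= exp 4 <= 3^4]. *)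
Lemma pow_ge_inv_81 m a : 1 / 2 <= a <= 1 -> INR m * (1 - a) <= 2 -> / 81 <= a ^ m.
Proof.
  intros Ha Hm.
  assert (Hexp : (1 + 2 * (1 - a)) ^ m <= 81).
  { apply Rle_trans with (exp (2 * (1 - a)) ^ m).
    { apply pow_incr. split; [lra | apply exp_ineq1_le]. }
    rewrite exp_pow. apply Rle_trans with (exp 4).
    { destruct (Req_dec (INR m * (2 * (1 - a))) 4) as [-> | Hne]; [lra|].
      left. apply exp_increasing. lra. }
    replace 4 with (INR 4 * 1) by (simpl; ring). rewrite <- exp_pow.
    replace 81 with (3 ^ 4) by ring.
    apply pow_incr. split; [left; apply exp_pos | apply exp_le_3]. }
  assert (Hprod : 1 <= a ^ m * (1 + 2 * (1 - a)) ^ m).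
  { rewrite <- Rpow_mult_distr.
    apply Rle_trans with (1 ^ m); [rewrite pow1; lra | apply pow_incr; split; nra]. }
  assert (0 <= a ^ m) by (apply pow_le; lra).
  nra.
Qed.

Lemma Rabs_1_minus_exp_ge L : Rmin (Rabs L) 1 / 2 <= Rabs (1 - exp L).
Proof.
  pose proof (exp_ineq1_le L).
  destruct (Rle_dec 0 L).
  - rewrite (Rabs_pos_eq L), (Rabs_left1 (1 - exp L)) by lra.
    pose proof (Rmin_l L 1). lra.
  - pose proof (exp_ineq1_le (- L)). pose proof (exp_pos L).
    assert (Hinv : exp L * exp (- L) = 1) by (rewrite <- exp_plus, Rplus_opp_r; apply exp_0).
    rewrite (Rabs_left L), (Rabs_pos_eq (1 - exp L)) by nra.
    unfold Rmin. destruct (Rle_dec _ _); nra.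
Qed.

Lemma ln_sub_ge a b : 0 < a -> 0 < b -> 1 - b / a <= ln a - ln b.
Proof.
  intros Ha Hb. pose proof (exp_ineq1_le (ln b - ln a)) as Hexp.
  unfold Rminus in Hexp at 2. rewrite exp_plus, exp_Ropp, !exp_ln in Hexp by auto.
  unfold Rdiv. lra.
Qed.

Definition log_odds_diff (p q : R) : R := ln q - ln p - (ln (1 - q) - ln (1 - p)).

Lemma log_odds_diff_ge p q : 0 < p < q -> q < 1 ->
  Rmin ((q - p) / (2 * (p * (1 - p)))) (1 / 2) <= log_odds_diff p q.
Proof.
  intros Hpq Hq. unfold log_odds_diff.
  pose proof (ln_sub_ge q p ltac:(lra) ltac:(lra)) as Hln.
  pose proof (ln_sub_ge (1 - p) (1 - q) ltac:(lra) ltac:(lra)) as Hln'.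
  replace (1 - p / q) with ((q - p) / q) in Hln by (field; lra).
  replace (1 - (1 - q) / (1 - p)) with ((q - p) / (1 - p)) in Hln' by (field; lra).
  assert (0 <= (q - p) / (1 - p)) by (apply Rle_mult_inv_pos; lra).
  destruct (Rle_dec q (2 * p)).
  - apply Rle_trans with ((q - p) / (2 * (p * (1 - p)))); [apply Rmin_l|].
    replace ((q - p) / (2 * (p * (1 - p)))) with ((q - p) / (2 * p) + (q - p) / (2 * (1 - p)))
      by (field; lra).
    assert ((q - p) / (2 * p) <= (q - p) / q).
    { apply Rmult_le_compat_l; [lra|]. apply Rinv_le_contravar; lra. }
    assert ((q - p) / (2 * (1 - p)) <= (q - p) / (1 - p)).
    { apply Rmult_le_compat_l; [lra|]. apply Rinv_le_contravar; lra. }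
    lra.
  - apply Rle_trans with (1 / 2); [apply Rmin_r|].
    assert (1 / 2 <= (q - p) / q).
    { apply Rmult_le_reg_r with q; [lra|]. field_simplify; lra. }
    lra.
Qed.

Lemma Rabs_log_odds_diff_ge p q : 0 < p < 1 -> 0 < q < 1 ->
  Rmin (Rabs (p - q) / (2 * (p * (1 - p)))) (1 / 2) <= Rabs (log_odds_diff p q).
Proof.
  intros Hp Hq. destruct (Rtotal_order p q) as [Hlt | [-> | Hgt]].
  - pose proof (log_odds_diff_ge p q ltac:(lra) ltac:(lra)) as H.
    rewrite Rabs_minus_sym, (Rabs_pos_eq (q - p)) by lra.
    eapply Rle_trans; [apply H | apply Rle_abs].
  - rewrite Rminus_diag, Rabs_R0. unfold Rdiv. rewrite Rmult_0_l.
    apply Rle_trans with 0; [apply Rmin_l | apply Rabs_pos].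
  - pose proof (log_odds_diff_ge (1 - p) (1 - q) ltac:(lra) ltac:(lra)) as H.
    replace (1 - q - (1 - p)) with (p - q) in H by ring.
    replace (1 - (1 - p)) with p in H by ring.
    replace (log_odds_diff (1 - p) (1 - q)) with (- log_odds_diff p q) in H
      by (unfold log_odds_diff; replace (1 - (1 - p)) with p by ring;
          replace (1 - (1 - q)) with q by ring; ring).
    rewrite (Rmult_comm (1 - p)) in H. rewrite (Rabs_pos_eq (p - q)) by lra.
    eapply Rle_trans; [apply H|]. rewrite <- Rabs_Ropp. apply Rle_abs.
Qed.

Lemma Rmin_abs_ge_far b s d w : 0 < b -> 0 < s -> 16 * s ^ 2 <= d ^ 2 -> 2 * b * s <= 1 ->
  2 * b * s - 8 * b * s * w ^ 2 / d ^ 2 <= Rmin (b * Rabs (w + d)) 1.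
Proof.
  intros Hb Hs Hd Hbs.
  assert (Hd2 : 0 < d ^ 2) by nra.
  assert (Hd0 : d <> 0) by (intro Hz; rewrite Hz in Hd2; simpl in Hd2; lra).
  set (r := w ^ 2 / d ^ 2).
  assert (Hr : r * d ^ 2 = w ^ 2) by (unfold r; field; auto).
  replace (8 * b * s * w ^ 2 / d ^ 2) with (8 * b * s * r) by (unfold r; field; auto).
  destruct (Rle_dec (d ^ 2) (4 * w ^ 2)).
  - assert (1 <= 4 * r) by nra.
    assert (0 <= Rmin (b * Rabs (w + d)) 1).
    { apply Rmin_glb; [apply Rmult_le_pos; [lra | apply Rabs_pos] | lra]. }
    assert (0 <= b * s * (4 * r - 1)) by (apply Rmult_le_pos; nra).
    lra.
  - assert (0 <= r) by (unfold r; apply Rle_mult_inv_pos; [apply pow2_ge_0 | lra]).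
    assert (0 <= b * s * r) by (apply Rmult_le_pos; nra).
    cut (2 * b * s <= Rmin (b * Rabs (w + d)) 1); [lra|].
    apply Rmin_glb; [|lra].
    rewrite <- (pow2_abs d), <- (pow2_abs w) in *.
    pose proof (Rabs_pos d). pose proof (Rabs_pos w).
    pose proof (Rabs_triang_inv d (- w)) as Htri. rewrite Rabs_Ropp in Htri.
    replace (d - - w) with (w + d) in Htri by ring.
    assert (4 * s <= Rabs d) by nra.
    assert (2 * Rabs w <= Rabs d) by nra.
    nra.
Qed.

Lemma Rmin_abs_ge_quartic b K z : 0 <= b -> 0 < K ->
  b * (3 * z ^ 2 / (2 * K) - z ^ 4 / (2 * K ^ 3)) - b ^ 2 * z ^ 2 / 4 <= Rmin (b * Rabs z) 1.
Proof.
  intros Hb HK. set (a := Rabs z).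
  assert (Ha : 0 <= a) by apply Rabs_pos.
  replace (z ^ 4) with ((z ^ 2) ^ 2) by ring. rewrite <- (pow2_abs z). fold a.
  assert (Hgap : a - (3 * a ^ 2 / (2 * K) - (a ^ 2) ^ 2 / (2 * K ^ 3)) =
                 a * (a - K) ^ 2 * (a + 2 * K) / (2 * K ^ 3)) by (field; lra).
  assert (0 <= a * (a - K) ^ 2 * (a + 2 * K) / (2 * K ^ 3)).
  { apply Rle_mult_inv_pos; [|pose proof (pow_lt K 3 HK); lra].
    apply Rmult_le_pos; [apply Rmult_le_pos; [lra | apply pow2_ge_0] | lra]. }
  assert (Hmin : b * a - (b * a) ^ 2 / 4 <= Rmin (b * a) 1).
  { apply Rmin_glb; [nra|]. pose proof (pow2_ge_0 (b * a - 2)). nra. }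
  nra.
Qed.

Lemma binom_expect_pow4_le m p c : 0 <= p <= 1 ->
  let v := INR m * (p * (1 - p)) in
  1 <= v -> (INR m * p - c) ^ 2 <= 16 * v ->
  binom_expect m p (fun k => (INR k - c) ^ 4) <= 400 * v ^ 2.
Proof.
  intros Hp v Hv Hd. rewrite binom_expect_pow4. cbv zeta. fold v.
  set (d := INR m * p - c) in *.
  assert (0 <= p * (1 - p)) by nra.
  assert (d ^ 4 <= 256 * v ^ 2) by (pose proof (pow2_ge_0 d); nra).
  assert (Hodd : d * (1 - 2 * p) <= 4 * v).
  { assert ((d * (1 - 2 * p)) ^ 2 <= (4 * v) ^ 2) by (pose proof (pow2_ge_0 d); nra).
    nra. }
  nra.
Qed.

Section AntiConcentration.

Variables (m : nat) (p c b s : R).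
Hypotheses (Hp : 0 <= p <= 1) (Hs : s * s = INR m * (p * (1 - p))) (Hb : 0 < b).

(* Far from the mean, a quadratic minorant centred at the mean and Chebyshev. *)
Lemma binom_expect_min_abs_far : 0 < s -> b * s <= 1 / 2 ->
  16 * s ^ 2 <= (INR m * p - c) ^ 2 ->
  b * s <= binom_expect m p (fun k => Rmin (b * Rabs (INR k - c)) 1).
Proof.
  intros Hs0 Hbs Hfar. set (d := INR m * p - c) in *.
  assert (Hd2 : 0 < d ^ 2) by nra.
  assert (Hd0 : d <> 0) by (intro Hz; rewrite Hz in Hd2; simpl in Hd2; lra).
  apply Rle_trans with
    (binom_expect m p (fun k =>
       (2 * b * s) * 1 + (- 8 * b * s / d ^ 2) * (INR k - INR m * p) ^ 2)).
  - rewrite binom_expect_lin, binom_expect_1, binom_expect_sq, Rminus_diag, <- Hs.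
    replace (- 8 * b * s / d ^ 2 * (0 ^ 2 + s * s)) with (- 8 * b * s * (s ^ 2 / d ^ 2))
      by (field; auto).
    assert (s ^ 2 / d ^ 2 <= 1 / 16).
    { apply Rmult_le_reg_r with (d ^ 2); [lra|]. field_simplify; lra. }
    assert (b * s * (s ^ 2 / d ^ 2) <= b * s * (1 / 16)) by (apply Rmult_le_compat_l; nra).
    nra.
  - apply binom_expect_le; auto. intros k _.
    replace (INR k - c) with ((INR k - INR m * p) + d) by (unfold d; ring).
    replace (- 8 * b * s / d ^ 2 * (INR k - INR m * p) ^ 2)
      with (- (8 * b * s * (INR k - INR m * p) ^ 2 / d ^ 2)) by (field; auto).
    pose proof (Rmin_abs_ge_far b s d (INR k - INR m * p) Hb Hs0 Hfar ltac:(lra)). lra.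
Qed.

(* Near the mean, [|z| >= 3 z^2 / (2 K) - z^4 / (2 K^3)] with [K = 20 s] reduces
   the bound to the second and fourth central moments. *)
Lemma binom_expect_min_abs_near : 1 <= s -> b * s <= 1 / 200 ->
  (INR m * p - c) ^ 2 <= 16 * s ^ 2 ->
  b * s / 40 <= binom_expect m p (fun k => Rmin (b * Rabs (INR k - c)) 1).
Proof.
  intros Hs1 Hbs Hnear. assert (Hbs0 : 0 < b * s) by nra. set (K := 20 * s).
  set (a2 := 3 * b / (2 * K) - b ^ 2 / 4). set (a4 := b / (2 * K ^ 3)).
  apply Rle_trans with
    (binom_expect m p (fun k => a2 * (INR k - c) ^ 2 + (- a4) * (INR k - c) ^ 4)).
  - rewrite binom_expect_lin, binom_expect_sq.
    pose proof (binom_expect_pow4_le m p c Hp) as H4. cbv zeta in H4. rewrite <- Hs in H4.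
    specialize (H4 ltac:(nra) ltac:(nra)).
    assert (Ha2 : a2 * (s * s) = 3 * (b * s) / 40 - (b * s) ^ 2 / 4)
      by (unfold a2, K; field; lra).
    assert (Ha4 : a4 * (400 * (s * s) ^ 2) = b * s / 40) by (unfold a4, K; field; lra).
    assert (0 <= a2).
    { apply Rmult_le_reg_r with (s * s); [nra|]. rewrite Ha2, Rmult_0_l. nra. }
    assert (0 <= a4).
    { unfold a4, K. apply Rle_mult_inv_pos; [lra|]. pose proof (pow_lt (20 * s) 3). nra. }
    assert (0 <= a2 * (INR m * p - c) ^ 2) by (apply Rmult_le_pos; [lra | apply pow2_ge_0]).
    assert (a4 * binom_expect m p (fun k => (INR k - c) ^ 4) <= a4 * (400 * (s * s) ^ 2))
      by (apply Rmult_le_compat_l; auto).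
    assert ((b * s) ^ 2 <= b * s / 200) by nra.
    rewrite <- Hs. lra.
  - apply binom_expect_le; auto. intros k _.
    pose proof (Rmin_abs_ge_quartic b K (INR k - c) ltac:(lra) ltac:(unfold K; lra)).
    replace (a2 * (INR k - c) ^ 2 + - a4 * (INR k - c) ^ 4) with
      (b * (3 * (INR k - c) ^ 2 / (2 * K) - (INR k - c) ^ 4 / (2 * K ^ 3))
       - b ^ 2 * (INR k - c) ^ 2 / 4) by (unfold a2, a4, K; field; lra).
    lra.
Qed.

Lemma binom_expect_min_abs_ge : 1 <= s -> b * s <= 1 / 200 ->
  b * s / 40 <= binom_expect m p (fun k => Rmin (b * Rabs (INR k - c)) 1).
Proof.
  intros Hs1 Hbs. destruct (Rle_dec (16 * s ^ 2) ((INR m * p - c) ^ 2)) as [Hfar | Hnear].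
  - pose proof (binom_expect_min_abs_far ltac:(lra) ltac:(lra) Hfar). nra.
  - apply binom_expect_min_abs_near; lra.
Qed.

End AntiConcentration.

(* The real point at which [Bin(m, p)] and [Bin(m, q)] have equal likelihood. *)
Definition likelihood_crossing (m : nat) (p q : R) : R :=
  INR m * (ln (1 - p) - ln (1 - q)) / log_odds_diff p q.

Lemma binom_pmf_ratio m p q k : 0 < p < 1 -> 0 < q < 1 -> log_odds_diff p q <> 0 ->
  (k <= m)%nat ->
  binom_pmf m q k =
  binom_pmf m p k * exp (log_odds_diff p q * (INR k - likelihood_crossing m p q)).
Proof.
  intros Hp Hq Hbeta Hk.
  replace (log_odds_diff p q * (INR k - likelihood_crossing m p q)) with
    ((INR k * ln q + INR (m - k) * ln (1 - q)) + - (INR k * ln p + INR (m - k) * ln (1 - p)))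
    by (unfold likelihood_crossing, log_odds_diff in *; rewrite minus_INR by auto; field; auto).
  rewrite exp_plus, exp_Ropp, !exp_plus, !exp_INR_mul_ln by lra.
  unfold binom_pmf.
  assert (0 < p ^ k) by (apply pow_lt; lra).
  assert (0 < (1 - p) ^ (m - k)) by (apply pow_lt; lra).
  field. lra.
Qed.

(* Termwise, [|P(k) - Q(k)| = P(k) |1 - exp (beta (k - c))| >= P(k) min(b |k - c|, 1) / 2]. *)
Lemma l1_binom_ge_expect_min m p q b : 0 < p < 1 -> 0 < q < 1 ->
  0 < b <= Rabs (log_odds_diff p q) ->
  binom_expect m p (fun k => Rmin (b * Rabs (INR k - likelihood_crossing m p q)) 1) / 2
  <= l1_binom m p q.
Proof.
  intros Hp Hq Hb. set (beta := log_odds_diff p q) in *.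
  assert (Hbeta : beta <> 0) by (intro Hz; rewrite Hz, Rabs_R0 in Hb; lra).
  unfold binom_expect, l1_binom. rewrite Rdiv_def, Rmult_comm, <- sum_f_R0_scal_l.
  apply sum_Rle. intros k Hk.
  rewrite (binom_pmf_ratio m p q k) by auto. fold beta.
  set (z := INR k - likelihood_crossing m p q).
  pose proof (binom_pmf_pos m p k Hp).
  replace (binom_pmf m p k - binom_pmf m p k * exp (beta * z))
    with (binom_pmf m p k * (1 - exp (beta * z))) by ring.
  rewrite Rabs_mult, (Rabs_pos_eq (binom_pmf m p k)) by lra.
  assert (Rmin (b * Rabs z) 1 <= Rmin (Rabs (beta * z)) 1).
  { apply Rle_min_compat_r. rewrite Rabs_mult.
    apply Rmult_le_compat_r; [apply Rabs_pos | lra]. }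
  pose proof (Rabs_1_minus_exp_ge (beta * z)). nra.
Qed.

Lemma mean_shift_le_log_odds_diff m p q : 0 < p < 1 -> 0 < q < 1 ->
  1 <= INR m * (p * (1 - p)) ->
  Rmin (mean_shift m p q) 1 / 2 <= Rabs (log_odds_diff p q) * sqrt (INR m * (p * (1 - p))).
Proof.
  intros Hp Hq Hv.
  assert (Hpp : 0 < p * (1 - p)) by nra.
  set (s := sqrt (INR m * (p * (1 - p)))).
  assert (Hs1 : 1 <= s) by (rewrite <- sqrt_1; apply sqrt_le_1_alt; lra).
  assert (Hshift : mean_shift m p q = Rabs (p - q) * s / (p * (1 - p))).
  { unfold mean_shift, s. rewrite (sqrt_mult_alt (INR m)) by apply pos_INR.
    pose proof (sqrt_lt_R0 _ Hpp). pose proof (sqrt_sqrt _ (Rlt_le _ _ Hpp)) as Htt.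
    set (t := sqrt (p * (1 - p))) in *. rewrite <- Htt. field. lra. }
  apply Rle_trans with (Rmin (Rabs (p - q) / (2 * (p * (1 - p)))) (1 / 2) * s).
  2:{ apply Rmult_le_compat_r; [lra | apply Rabs_log_odds_diff_ge; auto]. }
  pose proof (Rmin_l (mean_shift m p q) 1). pose proof (Rmin_r (mean_shift m p q) 1).
  unfold Rmin at 2. destruct (Rle_dec _ _).
  - replace (Rabs (p - q) / (2 * (p * (1 - p))) * s) with (mean_shift m p q / 2)
      by (rewrite Hshift; field; lra).
    lra.
  - lra.
Qed.

Lemma l1_binom_ge_mean_shift m p q : 0 < p < 1 -> 0 < q < 1 ->
  1 <= INR m * (p * (1 - p)) ->
  Rmin (mean_shift m p q) 1 / 16000 <= l1_binom m p q.
Proof.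
  intros Hp Hq Hv.
  pose proof (l1_binom_nonneg m p q).
  destruct (Req_dec p q) as [<- | Hpq].
  { unfold mean_shift. rewrite Rminus_diag, Rabs_R0, Rmult_0_r, Rdiv_0_l.
    pose proof (Rmin_l 0 1). lra. }
  set (s := sqrt (INR m * (p * (1 - p)))).
  assert (Hss : s * s = INR m * (p * (1 - p))) by (apply sqrt_sqrt; lra).
  assert (Hs1 : 1 <= s) by (rewrite <- sqrt_1; apply sqrt_le_1_alt; lra).
  assert (Hbeta0 : 0 < Rabs (log_odds_diff p q)).
  { eapply Rlt_le_trans; [|apply Rabs_log_odds_diff_ge; auto].
    apply Rmin_glb_lt; [|lra]. apply Rdiv_lt_0_compat; [apply Rabs_pos_lt; lra | nra]. }
  set (b := Rmin (Rabs (log_odds_diff p q)) (/ (200 * s))).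
  assert (Hb0 : 0 < b) by (apply Rmin_glb_lt; [|apply Rinv_0_lt_compat]; lra).
  assert (Hbs : b * s <= 1 / 200).
  { apply Rle_trans with (/ (200 * s) * s); [apply Rmult_le_compat_r; [lra | apply Rmin_r]|].
    right. field. lra. }
  assert (Hkey : Rmin (mean_shift m p q) 1 / 200 <= b * s).
  { pose proof (mean_shift_le_log_odds_diff m p q Hp Hq Hv) as Hshift. fold s in Hshift.
    pose proof (Rmin_r (mean_shift m p q) 1).
    pose proof (Rmin_glb (mean_shift m p q) 1 0 (mean_shift_nonneg m p q) ltac:(lra)).
    unfold b, Rmin at 2. destruct (Rle_dec _ _).
    - lra.
    - replace (/ (200 * s) * s) with (1 / 200) by (field; lra). lra. }
  pose proof (l1_binom_ge_expect_min m p q b Hp Hq (conj Hb0 (Rmin_l _ _))).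
  pose proof (binom_expect_min_abs_ge m p (likelihood_crossing m p q) b s
                ltac:(lra) Hss Hb0 Hs1 Hbs).
  lra.
Qed.

Lemma l1_binom_ge_small_variance m p q : 0 <= p <= 1 -> 0 <= q <= 1 ->
  INR m * (p * (1 - p)) < 1 ->
  Rmin (INR m * Rabs (p - q)) 1 / 162 <= l1_binom m p q.
Proof.
  intros Hp Hq Hv.
  assert (0 <= Rmin (INR m * Rabs (p - q)) 1).
  { apply Rmin_glb; [apply Rmult_le_pos; [apply pos_INR | apply Rabs_pos] | lra]. }
  pose proof (pos_INR m).
  destruct (Rle_dec p (1 / 2)).
  - pose proof (pow_ge_inv_81 m (1 - p) ltac:(lra) ltac:(nra)).
    pose proof (pow_diff_ge m (1 - p) (1 - q) ltac:(lra) ltac:(lra)) as Hgap.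
    replace (1 - p - (1 - q)) with (- (p - q)) in Hgap by ring. rewrite Rabs_Ropp in Hgap.
    pose proof (l1_binom_ge_term m p q 0 ltac:(lia)) as Hterm.
    rewrite !binom_pmf_0 in Hterm. nra.
  - pose proof (pow_ge_inv_81 m p ltac:(lra) ltac:(nra)).
    pose proof (pow_diff_ge m p q Hp Hq) as Hgap.
    pose proof (l1_binom_ge_term m p q m ltac:(lia)) as Hterm.
    rewrite !binom_pmf_diag in Hterm. nra.
Qed.

Lemma l1_binom_ge_half_degenerate m p q : 0 < p < 1 -> 1 <= INR m * (p * (1 - p)) ->
  q = 0 \/ q = 1 -> 1 / 2 <= l1_binom m p q.
Proof.
  intros Hp Hv Hq. pose proof (pos_INR m). destruct Hq as [-> | ->].
  - pose proof (pow_diff_ge m 1 (1 - p) ltac:(lra) ltac:(lra)) as Hgap.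
    pose proof (l1_binom_ge_term m p 0 0 ltac:(lia)) as Hterm.
    rewrite !binom_pmf_0, Rminus_0_r, Rabs_minus_sym in Hterm.
    replace (1 - (1 - p)) with p in Hgap by ring.
    rewrite pow1, Rabs_pos_eq, Rmin_right in Hgap by nra. rewrite pow1 in Hterm. lra.
  - pose proof (pow_diff_ge m 1 p ltac:(lra) ltac:(lra)) as Hgap.
    pose proof (l1_binom_ge_term m p 1 m ltac:(lia)) as Hterm.
    rewrite !binom_pmf_diag, Rabs_minus_sym in Hterm.
    rewrite pow1, Rabs_pos_eq, Rmin_right in Hgap by nra. rewrite pow1 in Hterm. lra.
Qed.

Lemma l1_binom_lower m p q : 0 <= p <= 1 -> 0 <= q <= 1 ->
  rate m p q / 16000 <= l1_binom m p q.
Proof.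
  intros Hp Hq.
  pose proof (rate_le_lin m p q) as Hrate.
  pose proof (Rmin_r (INR m * Rabs (p - q)) 1).
  destruct (Rlt_le_dec (INR m * (p * (1 - p))) 1) as [Hsmall | Hlarge].
  { pose proof (l1_binom_ge_small_variance m p q Hp Hq Hsmall).
    assert (0 <= Rmin (INR m * Rabs (p - q)) 1).
    { apply Rmin_glb; [apply Rmult_le_pos; [apply pos_INR | apply Rabs_pos] | lra]. }
    lra. }
  assert (Hpp : p * (1 - p) <> 0) by (intro Hz; rewrite Hz, Rmult_0_r in Hlarge; lra).
  pose proof (var_neq0_interior p Hp Hpp) as Hp'.
  destruct (Req_dec q 0) as [Hq0 | Hq0]; [|destruct (Req_dec q 1) as [Hq1 | Hq1]].
  1, 2: pose proof (l1_binom_ge_half_degenerate m p q Hp' Hlarge ltac:(tauto)); lra.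
  pose proof (l1_binom_ge_mean_shift m p q Hp' ltac:(lra) Hlarge).
  pose proof (rate_le_mean_shift m p q ltac:(lra)). lra.
Qed.

Theorem theorem5 :
  exists c1 c2 : R, 0 < c1 /\ c1 <= c2 /\
    forall (m : nat) (p q : R),
      (1 <= m)%nat -> 0 <= p <= 1 -> 0 <= q <= 1 ->
      c1 * rate m p q <= l1_binom m p q /\
      l1_binom m p q <= c2 * rate m p q.
Proof.
  exists (/ 16000), 3. split; [lra | split; [lra |]].
  intros m p q _ Hp Hq. split.
  - pose proof (l1_binom_lower m p q Hp Hq). lra.
  - apply l1_binom_upper; auto.
Qed.
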